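(* Consider $n$ processes running the Median-based Byzantine Agreement algorithm (described in the context) with any parameter $\alpha$ satisfying $0 \le \alpha < \lceil n/6 \rceil - 1$, in a system in which fewer than $\lfloor n/3 \rfloor$ processes are Byzantine. Then the algorithm satisfies interval validity: letting $T$ be the multiset of inputs of the non-faulty processes, every value $d$ output by a non-faulty process satisfies $d \in \{\min T, \dots, \max T\}$.
   Context: System model: $n$ processes $p_1,\dots,p_n$ communicate over a complete network in fully synchronous rounds (every message sent in a round is delivered before the next round); the receiver of a message knows its sender. A Byzantine (faulty) process may deviate arbitrarily from the protocol, e.g. send different messages to different processes or omit messages; the other processes are non-faulty. Each process $p_i$ has an input value $v_i$ from a totally ordered domain $V$ (integers); $\bot \notin V$ is a special default value. WeakMVBA: a Byzantine agreement protocol (tolerating the given number of Byzantine processes) in which each process has an input and all non-faulty processes terminate with: (consistency) the same decision value; (weak validity) if all non-faulty processes have the same input $v$, the decision is $v$; otherwise the decision is some value of $V\cup\{\bot\}$. Median-based Byzantine Agreement algorithm with parameter $\alpha$, run by a process with input $v$: (1) send $v$ to all processes (including itself); initialize an array $A[1..n]$ to $\bot$ and set $A[i]$ to the value received from $p_i$. (2) For each $i=1,\dots,n$, in parallel, run an instance of WeakMVBA in which this process uses input $A[i]$, and replace $A[i]$ by the decision of that instance. (3) Output select\_value$(A)$, defined as: delete all $\bot$ entries of $A$ to obtain a list $A_{\not\bot}$ of length $k$; let $C[u]$ be the number of occurrences of $u$ in $A_{\not\bot}$ and let $m$ be a value maximizing $C[m]$ (ties broken by a fixed deterministic rule); if $C[m]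 \ge \lfloor k/3\rfloor + 1 + \alpha$, output $m$; otherwise sort $A_{\not\bot}$ in nondecreasing order and output its median element (the entry at position $\lfloor k/2 \rfloor$; for even $k$ the lower of the two middle values). *)

From mathcomp Require Import all_boot all_order all_algebra.
Set Implicit Arguments. Unset Strict Implicit. Unset Printing Implicit Defensive.
Import Order.TTheory GRing.Theory Num.Theory.

(* Values: V = int; the default value bot is encoded as [None : option int]. *)

(* A deterministic tie-breaking rule for the mode: on a nonempty list it
   returns some value of maximal multiplicity (the theorem is stated for
   every such rule). *)
Definition mode_rule (tb : seq int -> int) : Prop :=
  forall s : seq int, s != [::] ->
    tb s \in s /\ forall u : int, (count_mem u s <= count_mem (tb s) s)%N.

(* select_value(A): delete bot entries (k of them remain), take the mode m
   (ties broken by tb); output m if C[m] >= floor(k/3) + 1 + alpha, otherwise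
   the median of the sorted list (lower middle value for even k, i.e. the
   0-based position (k-1)/2). *)
Definition select_value (tb : seq int -> int) (alpha : nat)
    (A : seq (option int)) : int :=
  let s := pmap id A in
  let k := size s in
  let m := tb s in
  if (k %/ 3 + 1 + alpha <= count_mem m s)%N then m
  else nth (0%R : int) (sort (fun x y : int => (x <= y)%R) s) ((k.-1) %/ 2).

Definition weakMVBA_spec (n : nat) (F : {set 'I_n})
    (inp out : 'I_n -> option int) : Prop :=
  (forall i i' : 'I_n, i \notin F -> i' \notin F -> out i = out i') /\
  (forall x : option int,
      (forall i : 'I_n, i \notin F -> inp i = x) ->
      forall i : 'I_n, i \notin F -> out i = x).

(* An execution of the Median-based BA algorithm:
   - v i      : input of process i;
   - recv i j : value of A[j] at process i after step (1) (what i received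
                from j, or bot); a non-faulty sender j sends v j to everyone,
                a faulty one may send anything or nothing;
   - dec i j  : decision of process i in the j-th WeakMVBA instance (step 2),
                whose input at process i is recv i j. *)
Definition MBA_execution (n : nat) (F : {set 'I_n}) (v : 'I_n -> int)
    (recv dec : 'I_n -> 'I_n -> option int) : Prop :=
  (forall i j : 'I_n, i \notin F -> j \notin F -> recv i j = Some (v j)) /\
  (forall j : 'I_n, weakMVBA_spec F (fun i => recv i j) (fun i => dec i j)).

Definition MBA_output (n : nat) (tb : seq int -> int) (alpha : nat)
    (dec : 'I_n -> 'I_n -> option int) (i : 'I_n) : int :=
  select_value tb alpha [seq dec i j | j <- enum 'I_n].

(* Let f := #|F|. By weak validity of the WeakMVBA instances, a non-faulty
   process ends step (2) with the input of every non-faulty process at that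
   process's position, so among its k non-bot entries at most k - (n - f)
   satisfy a predicate that no non-faulty input satisfies. The mode is output
   only when it occurs more than k/3 times, and the lower median has at least
   k/2 entries on each side of it; since f < n/3 and k <= n, both counts exceed
   k - (n - f). Hence some non-faulty input equals the mode, and some lies
   below and some above the median. *)

From mathcomp Require Import all_boot all_order all_algebra zify.
Import Order.TTheory GRing.Theory Num.Theory.

Set Implicit Arguments.
Unset Strict Implicit.
Unset Printing Implicit Defensive.

Section SortedCount.
Variables (d : Order.disp_t) (T : orderType d) (x0 : T) (s : seq T) (p : nat).
Hypothesis p_lt_size : p < size s.

Let t := sort <=%O s.
Let t_sorted : sorted <=%O t := sort_sorted le_total s.
Let size_t : size t = size s := size_sort _ s.

Lemma count_le_nth_sort : p.+1 <= count (<= nth x0 t p)%O s.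
Proof.
rewrite -(count_sort <=%O) -/t -[X in count _ X](cat_take_drop p.+1 t) count_cat.
have size_take_t : size (take p.+1 t) = p.+1 by rewrite size_takel // size_t.
have /eqP -> : count (<= nth x0 t p)%O (take p.+1 t) == p.+1.
  rewrite -{2}size_take_t -all_count; apply/(all_nthP x0) => q.
  rewrite size_take_t => q_le_p; rewrite nth_take //.
  apply: (sorted_leq_nth le_trans lexx) => //; rewrite inE size_t //.
  exact: leq_trans p_lt_size.
exact: leq_addr.
Qed.

Lemma count_ge_nth_sort : size s - p <= count (>= nth x0 t p)%O s.
Proof.
rewrite -(count_sort <=%O) -/t -[X in count _ X](cat_take_drop p t) count_cat.
have size_drop_t : size (drop p t) = size s - p by rewrite size_drop size_t.
have /eqP -> : count (>= nth x0 t p)%O (drop p t) == size s - p.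
  rewrite -size_drop_t -all_count; apply/(all_nthP x0) => q.
  rewrite size_drop_t => q_lt; rewrite nth_drop.
  apply: (sorted_leq_nth le_trans lexx); rewrite ?inE ?size_t ?leq_addr //.
  by rewrite -ltn_subRL.
exact: leq_addl.
Qed.

End SortedCount.

Lemma count_pmap (aT rT : Type) (f : aT -> option rT) (P : pred rT) (s : seq aT) :
  count P (pmap f s) = count (fun x => oapp P false (f x)) s.
Proof. by elim: s => //= x s IHs; case: (f x) => [y|] /=; rewrite IHs. Qed.

Section HonestEntries.
Variables (T : finType) (V : Type) (F : {set T}) (a : T -> option V) (v : T -> V).
Hypothesis a_honest : forall j, j \notin F -> a j = Some (v j).

Lemma cardC_add_count_pmap_le (P : pred V) :
    (forall j, j \notin F -> ~~ P (v j)) ->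
  #|~: F| + count P (pmap a (enum T)) <= size (pmap a (enum T)).
Proof.
move=> notP; have -> : #|~: F| = count [pred j | j \notin F] (enum T).
  by rewrite enumT cardE /enum_mem size_filter; apply: eq_count => j; rewrite !inE.
rewrite size_pmap count_pmap -count_predUI.
have /eqP -> :
    count (predI [pred j | j \notin F] (fun j => oapp P false (a j))) (enum T) == 0.
  rewrite -leqn0 -(count_pred0 (enum T)); apply: sub_count => j /andP[/= Fj].
  by rewrite a_honest //= (negbTE (notP j Fj)).
rewrite addn0; apply: sub_count => j /orP[]; first by move=> /a_honest ->.
by case: (a j).
Qed.

Lemma exists_honest_of_count_gt (P : pred V) :
    size (pmap a (enum T)) < #|~: F| + count P (pmap a (enum T)) ->
  exists2 j, j \notin F & P (v j).
Proof.
case: (boolP [exists j, (j \notin F) && P (v j)]) => [/existsP[j /andP[]] | none].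
  by exists j.
suff /cardC_add_count_pmap_le : forall j, j \notin F -> ~~ P (v j).
  by rewrite ltnNge => ->.
by move=> j Fj; apply: contra none => Pj; apply/existsP; exists j; rewrite Fj.
Qed.

End HonestEntries.

Theorem lemma2 (n : nat) (alpha : nat) (tb : seq int -> int)
    (F : {set 'I_n}) (v : 'I_n -> int) (recv dec : 'I_n -> 'I_n -> option int) :
  mode_rule tb ->
  (alpha < (n + 5) %/ 6 - 1)%N ->
  (#|F| < n %/ 3)%N ->
  MBA_execution F v recv dec ->
  forall i : 'I_n, i \notin F ->
    (exists2 j : 'I_n, j \notin F & (v j <= MBA_output tb alpha dec i)%R) /\
    (exists2 j : 'I_n, j \notin F & (MBA_output tb alpha dec i <= v j)%R).
Proof.
move=> _ _ few_faulty [recv_honest dec_valid] i iF.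
have dec_honest j : j \notin F -> dec i j = Some (v j).
  by move=> jF; apply: (dec_valid j).2 => // i' i'F; apply: recv_honest.
have card_split : #|F| + #|~: F| = n by rewrite cardsC card_ord.
rewrite /MBA_output /select_value.
have -> : pmap id [seq dec i j | j <- enum 'I_n] = pmap (dec i) (enum 'I_n).
  by elim: (enum 'I_n) => //= j s ->.
set s := pmap (dec i) _; set k := size s.
have witness := exists_honest_of_count_gt dec_honest; rewrite -/s -/k in witness.
have k_le_n : k <= n.
  by rewrite /k size_pmap; apply: leq_trans (count_size _ _) _; rewrite size_enum_ord.
have honest_le_k : #|~: F| <= k.
  have := cardC_add_count_pmap_le dec_honest (P := pred0) (fun _ _ => isT).
  by rewrite count_pred0 addn0.
(* Below, [set c := count _ s] identifies counts that differ only in the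
   canonical instances they go through, which lia would treat as distinct. *)
case: ifP => [mode_frequent | _].
  have [j jF /eqP vj_mode] : exists2 j, j \notin F & v j == tb s.
    by apply: (witness (pred1 (tb s))); move: mode_frequent; set c := count _ s; lia.
  by split; exists j; rewrite // vj_mode.
change (sort _ s) with (sort <=%O s).
have mid_lt_k : k.-1 %/ 2 < k by lia.
have count_le := count_le_nth_sort 0%R mid_lt_k.
have count_ge := count_ge_nth_sort 0%R mid_lt_k; rewrite -/k in count_ge.
set med := nth 0%R _ _ in count_le count_ge *.
split.
- have /witness[j jF vj_le_med] : k < #|~: F| + count (<= med)%O s.
    by move: count_le; set c := count _ s; lia.
  by exists j.
- have /witness[j jF med_le_vj] : k < #|~: F| + count (>= med)%O s.
    by move: count_ge; set c := count _ s; lia.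
  by exists j.
Qed.
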